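(* Let $u$ be a non-constant twice differentiable function on $\mathbb{R}$ such that $u$, $u'$ and $u''$ are bounded, and assume that $|u'|$ attains its maximal value. Then $$\sup u'' \geq \frac{\|u'\|^2}{2\cdot \mathrm{osc}\,u},$$ where $\|u'\|=\sup_{\mathbb{R}}|u'|$ and $\mathrm{osc}\,u=\sup u-\inf u$. *)

From Stdlib Require Import Reals.
From Coquelicot Require Import Coquelicot.
Open Scope R_scope.

(* Supremum over R of a real function (as a real number; meaningful when
   f is bounded above, where Lub_Rbar is finite). *)
Definition sup_fun (f : R -> R) : R :=
  real (Lub_Rbar (fun y => exists x, y = f x)).

Definition inf_fun (f : R -> R) : R :=
  real (Glb_Rbar (fun y => exists x, y = f x)).

Definition osc (u : R -> R) : R := sup_fun u - inf_fun u.

Definition sup_norm (f : R -> R) : R := sup_fun (fun x => Rabs (f x)).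

Definition bounded_fun (f : R -> R) : Prop :=
  exists M, forall x, Rabs (f x) <= M.

(* With [S = sup u''], the function [u] lies below its tangent parabola
   [u(x0) + u'(x0) (t - x0) + S/2 (t - x0)^2] at any point [x0]. At the vertex
   [t = x0 - u'(x0)/S] of this parabola this gives
   [u(x0) - u(t) >= u'(x0)^2 / (2 S)], hence [osc u >= u'(x0)^2 / (2 S)];
   taking [x0] where [|u'|] is maximal yields the bound. *)
From Stdlib Require Import Reals Lra Psatz.
From Coquelicot Require Import Coquelicot.
Open Scope R_scope.

Lemma sup_fun_ub f M : (forall x, f x <= M) -> forall x, f x <= sup_fun f.
Proof.
  intros HM x. unfold sup_fun.
  destruct (Lub_Rbar_correct (fun y => exists x, y = f x)) as [Hub Hlub].
  pose proof (Hub (f x) (ex_intro _ x eq_refl)) as Hfx.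
  assert (HleM : Rbar_le (Lub_Rbar (fun y => exists x, y = f x)) M).
  { apply Hlub. intros y [z ->]. apply HM. }
  destruct (Lub_Rbar _); simpl in *; try contradiction; lra.
Qed.

Lemma inf_fun_lb f m : (forall x, m <= f x) -> forall x, inf_fun f <= f x.
Proof.
  intros Hm x. unfold inf_fun.
  destruct (Glb_Rbar_correct (fun y => exists x, y = f x)) as [Hlb Hglb].
  pose proof (Hlb (f x) (ex_intro _ x eq_refl)) as Hfx.
  assert (Hmle : Rbar_le m (Glb_Rbar (fun y => exists x, y = f x))).
  { apply Hglb. intros y [z ->]. apply Hm. }
  destruct (Glb_Rbar _); simpl in *; try contradiction; lra.
Qed.

Lemma sup_fun_attained f x0 : (forall x, f x <= f x0) -> sup_fun f = f x0.
Proof.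
  intros Hx0. apply Rle_antisym.
  - unfold sup_fun.
    assert (Hle : Rbar_le (Lub_Rbar (fun y => exists x, y = f x)) (f x0)).
    { apply Lub_Rbar_correct. intros y [z ->]. apply Hx0. }
    assert (Hfx0 : Rbar_le (f x0) (Lub_Rbar (fun y => exists x, y = f x))).
    { apply Lub_Rbar_correct. exists x0. reflexivity. }
    destruct (Lub_Rbar _); simpl in *; try contradiction; lra.
  - exact (sup_fun_ub f (f x0) Hx0 x0).
Qed.

Lemma bounded_fun_le_sup f : bounded_fun f -> forall x, f x <= sup_fun f.
Proof.
  intros [M HM]. apply (sup_fun_ub f M).
  intros x. pose proof (Rle_abs (f x)). pose proof (HM x). lra.
Qed.

Lemma bounded_fun_inf_le f : bounded_fun f -> forall x, inf_fun f <= f x.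
Proof.
  intros [M HM]. apply (inf_fun_lb f (- M)).
  intros x. pose proof (proj1 (Rabs_le_between (f x) M) (HM x)). lra.
Qed.

Lemma osc_ge_sub u : bounded_fun u -> forall a b, u b - u a <= osc u.
Proof.
  intros Hu a b. unfold osc.
  pose proof (bounded_fun_le_sup u Hu b). pose proof (bounded_fun_inf_le u Hu a).
  lra.
Qed.

Lemma mean_value (f df : R -> R) a b : (forall x, is_derive f x (df x)) ->
  exists c, Rmin a b <= c <= Rmax a b /\ f b - f a = df c * (b - a).
Proof.
  intros Hf. apply MVT_gen.
  - intros x _. apply Hf.
  - intros x _. apply continuity_pt_filterlim, (ex_derive_continuous f x).
    eexists. apply Hf.
Qed.

Lemma deriv0_constant f df : (forall x, is_derive f x (df x)) ->
  (forall x, df x = 0) -> forall a b, f a = f b.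
Proof.
  intros Hf Hdf0 a b. destruct (mean_value f df a b Hf) as [c [_ Hc]].
  rewrite Hdf0 in Hc. lra.
Qed.

(* Two applications of the mean value theorem: [h'(c)] has the sign of
   [x0 - c], and [c] lies between [t] and [x0]. *)
Lemma concave_critical_max h h1 h2 x0 :
  (forall x, is_derive h x (h1 x)) -> (forall x, is_derive h1 x (h2 x)) ->
  (forall x, h2 x <= 0) -> h1 x0 = 0 -> forall t, h t <= h x0.
Proof.
  intros Dh Dh1 Hh2 Hcrit t.
  destruct (mean_value h h1 t x0 Dh) as [c [Hc Hhc]].
  destruct (mean_value h1 h2 c x0 Dh1) as [d [_ Hh1d]].
  rewrite Hcrit in Hh1d.
  assert (Hsame : 0 <= (x0 - c) * (x0 - t)).
  { unfold Rmin, Rmax in Hc; destruct (Rle_dec t x0); nra. }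
  pose proof (Hh2 d). nra.
Qed.

Section TangentParabola.

Variables (u u1 u2 : R -> R) (S : R).
Hypothesis Du : forall x, is_derive u x (u1 x).
Hypothesis Du1 : forall x, is_derive u1 x (u2 x).
Hypothesis Hu2S : forall x, u2 x <= S.

Lemma le_tangent_parabola x0 t :
  u t <= u x0 + u1 x0 * (t - x0) + S / 2 * (t - x0) ^ 2.
Proof.
  pose (q t := u1 x0 * (t - x0) + S / 2 * (t - x0) ^ 2).
  assert (Dq : forall x, is_derive q x (u1 x0 + S * (x - x0))).
  { intros x. unfold q. auto_derive; [easy | field]. }
  assert (Dq1 : forall x, is_derive (fun x => u1 x0 + S * (x - x0)) x S).
  { intros x. auto_derive; [easy | ring]. }
  assert (Hle : u t - q t <= u x0 - q x0).
  { apply (concave_critical_max (fun t => u t - q t)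
      (fun x => u1 x - (u1 x0 + S * (x - x0))) (fun x => u2 x - S)).
    - intros x. exact (is_derive_minus _ _ x _ _ (Du x) (Dq x)).
    - intros x. exact (is_derive_minus _ _ x _ _ (Du1 x) (Dq1 x)).
    - intros x. pose proof (Hu2S x). lra.
    - lra. }
  unfold q in Hle. lra.
Qed.

Hypothesis HSpos : 0 < S.

Lemma drop_at_vertex x0 : u1 x0 ^ 2 / (2 * S) <= u x0 - u (x0 - u1 x0 / S).
Proof.
  pose proof (le_tangent_parabola x0 (x0 - u1 x0 / S)) as Hle.
  assert (Hvertex : u1 x0 * (x0 - u1 x0 / S - x0) + S / 2 * (x0 - u1 x0 / S - x0) ^ 2
                    = - (u1 x0 ^ 2 / (2 * S))) by (field; lra).
  lra.
Qed.

Lemma sq_deriv_le_osc x0 : bounded_fun u -> u1 x0 ^ 2 / (2 * S) <= osc u.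
Proof.
  intros Hu. pose proof (drop_at_vertex x0).
  pose proof (osc_ge_sub u Hu (x0 - u1 x0 / S) x0). lra.
Qed.

End TangentParabola.

(* A bounded function cannot have [u'' <= 0] unless [u' = 0]: otherwise the
   bound [u'(x0)^2 / (2 S) <= osc u] would hold for arbitrarily small [S > 0]. *)
Lemma deriv2_ub_pos u u1 u2 S x0 :
  (forall x, is_derive u x (u1 x)) -> (forall x, is_derive u1 x (u2 x)) ->
  (forall x, u2 x <= S) -> bounded_fun u -> u1 x0 <> 0 -> 0 < S.
Proof.
  intros Du Du1 Hu2S Hu Hx0.
  destruct (Rlt_or_le 0 S) as [HSpos | HSnpos]; [exact HSpos | exfalso].
  assert (Hsq : 0 < u1 x0 ^ 2) by (rewrite <- Rsqr_pow2; apply Rsqr_pos_lt, Hx0).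
  assert (Hosc : forall S', 0 < S' -> u1 x0 ^ 2 / (2 * S') <= osc u).
  { intros S' HS'. apply (sq_deriv_le_osc u u1 u2 S'); auto.
    intros x. pose proof (Hu2S x). lra. }
  pose proof (Hosc 1 Rlt_0_1) as Hosc1.
  set (S' := u1 x0 ^ 2 / (2 * (osc u + 1))).
  assert (HS' : 0 < S') by (apply Rdiv_lt_0_compat; lra).
  pose proof (Hosc S' HS') as Hbig.
  replace (u1 x0 ^ 2 / (2 * S')) with (osc u + 1) in Hbig by (unfold S'; field; lra).
  lra.
Qed.

Theorem proposition2p1 (u : R -> R)
  (Hd1 : forall x, ex_derive u x)
  (Hd2 : forall x, ex_derive (Derive u) x)
  (Hnc : exists x y, u x <> u y)
  (Hbu : bounded_fun u)
  (Hbu1 : bounded_fun (Derive u))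
  (Hbu2 : bounded_fun (Derive (Derive u)))
  (Hmax : exists x0, forall x, Rabs (Derive u x) <= Rabs (Derive u x0)) :
  sup_fun (Derive (Derive u)) >= (sup_norm (Derive u)) ^ 2 / (2 * osc u).
Proof.
  assert (Du : forall x, is_derive u x (Derive u x))
    by (intros x; apply Derive_correct; apply Hd1).
  assert (Du1 : forall x, is_derive (Derive u) x (Derive (Derive u) x))
    by (intros x; apply Derive_correct; apply Hd2).
  destruct Hmax as [x0 Hx0].
  unfold sup_norm. rewrite (sup_fun_attained _ x0 Hx0), pow2_abs.
  pose proof (bounded_fun_le_sup _ Hbu2) as HS.
  assert (Hx0nz : Derive u x0 <> 0).
  { intros Hz. destruct Hnc as [a [b Hab]]. apply Hab.
    apply (deriv0_constant u (Derive u) Du). intros x.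
    pose proof (Hx0 x) as Hx. rewrite Hz, Rabs_R0 in Hx.
    pose proof (Rabs_pos (Derive u x)). apply Rabs_eq_0. lra. }
  pose proof (deriv2_ub_pos _ _ _ _ x0 Du Du1 HS Hbu Hx0nz) as HSpos.
  pose proof (sq_deriv_le_osc _ _ _ _ Du Du1 HS HSpos x0 Hbu) as Hle.
  apply Rle_div_l in Hle; [| lra].
  assert (Hsq : 0 < Derive u x0 ^ 2)
    by (rewrite <- Rsqr_pow2; apply Rsqr_pos_lt, Hx0nz).
  assert (Hosc : 0 < osc u) by nra.
  apply Rle_ge, Rle_div_l; nra.
Qed.
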